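(* Let $s_0,\dots,s_m\in\Sigma^n$ be strings such that $s_{i+1}=ICR(s_i)$ for all $0\le i<m$. Then \[P(H(s_0)) - P(H(s_m)) \equiv \sum_{i=0}^{m-1} e_{s_i[0]} \mod K.\]
   Context: Let $k\ge 1$ be an integer, $\Sigma=\{0,1,\dots,k-1\}$ with arithmetic on symbols taken modulo $k$, and $n\ge 1$. For $s\in\Sigma^n$ write $s=s[0]s[1]\cdots s[n-1]$. The histogram of a string $s$ is $H(s):\Sigma\to\mathbb{Z}$, $H(s)(c)=$ number of occurrences of $c$ in $s$. For $b\in\Sigma$, $e_b:\Sigma\to\mathbb{Z}$ is the indicator function of $b$. $K:\Sigma\to\mathbb{Z}$ is the constant function $1$. For $H:\Sigma\to\mathbb{Z}$, its partial sum is $P(H):\Sigma\to\mathbb{Z}$, $P(H)(i)=\sum_{j=0}^{i}H(j)$. For $F,G:\Sigma\to\mathbb{Z}$, $F\equiv G \mod K$ means $F-G$ is an integer multiple of $K$. The incremented cycle register rule is $ICR(s)=s[1]s[2]\cdots s[n-1](s[0]+1)$. *)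

From mathcomp Require Import all_boot all_order all_algebra.
Set Implicit Arguments. Unset Strict Implicit. Unset Printing Implicit Defensive.
Import GRing.Theory Num.Theory.
Local Open Scope ring_scope.

(* Alphabet Sigma = 'I_k = {0,...,k-1}; the successor mod k is ordS. *)
(* Strings are sequences over 'I_k (their length is constrained separately). *)

Definition hist k (s : seq 'I_k) : 'I_k -> int := fun c => (count_mem c s)%:Z.

Definition indic k (b : 'I_k) : 'I_k -> int := fun c => (c == b)%:Z.

Definition psum k (F : 'I_k -> int) : 'I_k -> int :=
  fun i => \sum_(j < k | (j <= i)%N) F j.

(* F == G mod K : F - G is an integer multiple of the constant function 1. *)
Definition eqmodK k (F G : 'I_k -> int) : Prop :=
  exists z : int, forall c, F c - G c = z.

Definition ICR k (s : seq 'I_k) : seq 'I_k :=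
  match s with
  | x :: t => rcons t (ordS x)
  | [::] => [::]
  end.

Definition indic_first k (s : seq 'I_k) : 'I_k -> int :=
  match s with
  | x :: _ => indic x
  | [::] => fun _ => 0
  end.

From mathcomp Require Import all_boot all_order all_algebra.
Set Implicit Arguments. Unset Strict Implicit. Unset Printing Implicit Defensive.
Import GRing.Theory Num.Theory.
Local Open Scope ring_scope.

(* One ICR step removes an occurrence of x := s[0] and adds one of x + 1, so
   P(H) loses the indicator of [x, k) and gains that of [x + 1 mod k, k).
   Their difference is e_x, except when x = k - 1, where x + 1 wraps to 0 and
   the difference is e_x - K.  Summing over the m steps telescopes. *)

Lemma eqmodK_add k (F G F' G' : 'I_k -> int) :
  eqmodK F G -> eqmodK F' G' ->
  eqmodK (fun c => F c + F' c) (fun c => G c + G' c).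
Proof.
by move=> [z Hz] [z' Hz']; exists (z + z') => c; rewrite opprD addrACA Hz Hz'.
Qed.

Lemma psum_indic k (b c : 'I_k) : psum (indic b) c = (b <= c)%N%:Z.
Proof.
rewrite /psum /indic big_mkcond (bigD1 b) //= eqxx big1 ?addr0.
  by case: (b <= c)%N.
by move=> j /negbTE ->; case: ifP.
Qed.

Lemma psum_indic_ordS k (x c : 'I_k) :
  psum (indic x) c - psum (indic (ordS x)) c = indic x c - (x.+1 == k)%:Z.
Proof.
rewrite !psum_indic /indic -val_eqE /=.
case: (ltnP x.+1 k) => [lt_x1k | le_kx1].
  by rewrite modn_small // (ltn_eqF lt_x1k); case: (ltngtP x c).
have x1_eq_k : x.+1 = k by apply/eqP; rewrite eqn_leq le_kx1 ltn_ord.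
rewrite x1_eq_k modnn eqxx.
have le_cx : (c <= x)%N by rewrite -ltnS x1_eq_k.
by case: (ltngtP x c) le_cx.
Qed.

Lemma hist_ICR k (x : 'I_k) (u : seq 'I_k) c :
  hist (ICR (x :: u)) c = hist (x :: u) c - indic x c + indic (ordS x) c.
Proof.
rewrite /hist /indic /= -cats1 count_cat /= addn0 !(eq_sym c).
by rewrite !PoszD (addrC (x == c)%:Z) addrK.
Qed.

Lemma eqmodK_ICR k (t : seq 'I_k) :
  eqmodK (fun c => psum (hist t) c - psum (hist (ICR t)) c) (indic_first t).
Proof.
case: t => [|x u]; first by exists 0 => c; rewrite !subrr.
exists (- (x.+1 == k)%:Z) => c.
rewrite /psum -sumrB (eq_bigr (fun j => indic x j - indic (ordS x) j)).
  by rewrite sumrB psum_indic_ordS /= addrAC subrr add0r.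
by move=> j _; rewrite hist_ICR opprD opprB addrA (addrC (hist _ j)) subrK.
Qed.

Theorem lemma2 (k n m : nat) (hk : (1 <= k)%N) (hn : (1 <= n)%N)
  (s : nat -> seq 'I_k)
  (hsize : forall i, (i <= m)%N -> size (s i) = n)
  (hstep : forall i, (i < m)%N -> s i.+1 = ICR (s i)) :
  eqmodK (fun c => psum (hist (s 0%N)) c - psum (hist (s m)) c)
         (fun c => \sum_(i < m) indic_first (s i) c).
Proof.
clear hk hn hsize.
elim: m hstep => [|m IH] hstep; first by exists 0 => c; rewrite big_ord0 !subrr.
have IHm := IH (fun i lt_im => hstep i (ltnW lt_im)).
have [z Hz] := eqmodK_add IHm (eqmodK_ICR (s m)).
exists z => c; rewrite -(Hz c) hstep // big_ord_recr /=.
by rewrite addrA subrK.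
Qed.
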